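(* Let $\mathcal{L}=(\mathrm{Fm},\vdash)$ be a selfextensional logic, $N\subseteq\mathrm{Fm}\times\mathrm{Fm}$ a normative system, $P\subseteq P_N$ a conditional permission system, and $(\mathrm{X})\in\{(\top),(\mathrm{SI}),(\mathrm{WO})\}$. Then: 1. $S^{(\mathrm{AND})}(P,N)$ is closed under $(\mathrm{AND})^{\downarrow}$. 2. $S^{(\mathrm{OR})}(P,N)$ is closed under $(\mathrm{OR})^{\downarrow}$. 3. If $N^{(\mathrm{CT})}$ and $N^{(\mathrm{CT})}_{(\beta,\gamma)}$ are closed under (AND) for every $(\beta,\gamma)\in P$, then $S^{(\mathrm{CT})}(P,N)$ is closed under $(\mathrm{CT})^{\downarrow}$. 4. $S^{(\mathrm{X})}(P,N)$ is closed under (X). 5. For $1\le i\le4$, if $S^i(P,N)$ is closed under (SI) and $(\mathrm{CT})^{\downarrow}$, then $S^i(P,N)$ is closed under $(\mathrm{AND})^{\downarrow}$.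
   Context: $Cn(\Gamma)=\{\psi\mid\Gamma\vdash\psi\}$, $Cn(\varphi,\psi)=Cn(\{\varphi,\psi\})$. Standing convention: rules mentioning $\wedge,\vee,\top$ are considered only for logics having a term $\wedge$ with $Cn(\varphi\wedge\psi)=Cn(\{\varphi,\psi\})$, a term $\vee$ with $Cn(\varphi\vee\psi)=Cn(\varphi)\cap Cn(\psi)$, a constant $\top$ with $\top\in Cn(\varphi)$ for all $\varphi$, respectively. Rules on a relation $R\subseteq\mathrm{Fm}\times\mathrm{Fm}$: $(\top)$: $(\top,\top)\in R$; (SI): $(\alpha,\varphi)\in R,\beta\vdash\alpha\Rightarrow(\beta,\varphi)\in R$; (WO): $(\alpha,\varphi)\in R,\varphi\vdash\psi\Rightarrow(\alpha,\psi)\in R$; (AND): $(\alpha,\varphi),(\alpha,\psi)\in R\Rightarrow(\alpha,\varphi\wedge\psi)\in R$; (OR): $(\alpha,\varphi),(\beta,\varphi)\in R\Rightarrow(\alpha\vee\beta,\varphi)\in R$; (CT): $(\alpha,\varphi),(\alpha\wedge\varphi,\psi)\in R\Rightarrow(\alpha,\psi)\in R$. Rules relating $R$ to $N$: $(\mathrm{AND})^{\downarrow}$: $(\alpha,\varphi)\in N,(\alpha,\psi)\in R\Rightarrow(\alpha,\varphi\wedge\psi)\in R$; $(\mathrm{OR})^{\downarrow}$: $(\alpha,\varphi)\in N,(\beta,\varphi)\in R\Rightarrow(\alpha\vee\beta,\varphi)\in R$; $(\mathrm{CT})^{\downarrow}$: $(\alpha,\varphi)\in N,(\alpha\wedge\varphi,\psi)\in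 R\Rightarrow(\alpha,\varphi\wedge\psi)\in R$. $N^{(\mathrm{R})}$ is the smallest extension of $N$ closed under the single rule (R); $N^{(\mathrm{R})}_{(\alpha,\varphi)}$ the smallest extension of $N\cup\{(\alpha,\varphi)\}$ closed under (R); $N^i$, $N^i_{(\alpha,\varphi)}$ the same for the rule sets $i=1$: $(\top)$,(SI),(WO),(AND); $i=2$: plus (OR); $i=3$: $(\top)$,(SI),(WO),(AND),(CT); $i=4$: all six. $S^{(\mathrm{R})}(P,N)=\bigcup\{N^{(\mathrm{R})}_{(\alpha,\varphi)}\mid(\alpha,\varphi)\in P\}$ if $P\neq\varnothing$, and $N^{(\mathrm{R})}$ if $P=\varnothing$; $S^i(P,N)$ analogously with $N^i$. $P_N=\{(\alpha,\varphi)\mid\forall\psi((\alpha,\psi)\in N\Rightarrow Cn(\varphi,\psi)\neq\mathrm{Fm})\}$. *)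

From Stdlib Require Import Fin.

Set Implicit Arguments.

Record signature := { sym : Type; arity : sym -> nat }.

Inductive Fm (Sg : signature) : Type :=
| Var : nat -> Fm Sg
| App : forall f : sym Sg, (Fin.t (arity Sg f) -> Fm Sg) -> Fm Sg.

Arguments Var {Sg} _.
Arguments App {Sg} f _.

Fixpoint subst {Sg : signature} (s : nat -> Fm Sg) (t : Fm Sg) : Fm Sg :=
  match t with
  | Var n => s n
  | App f a => App f (fun i => subst s (a i))
  end.

Fixpoint closed {Sg : signature} (t : Fm Sg) : Prop :=
  match t with
  | Var _ => False
  | App f a => forall i, closed (a i)
  end.

(* the binary term operation induced by a formula d(x0, x1):
   x0 |-> phi, every other variable |-> psi *)
Definition bin {Sg : signature} (d : Fm Sg) (phi psi : Fm Sg) : Fm Sg :=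
  subst (fun n => match n with O => phi | S _ => psi end) d.

Definition sing {Sg : signature} (a : Fm Sg) : Fm Sg -> Prop := fun x => x = a.
Definition pair2 {Sg : signature} (a b : Fm Sg) : Fm Sg -> Prop :=
  fun x => x = a \/ x = b.

Record logic (Sg : signature) := {
  vdash : (Fm Sg -> Prop) -> Fm Sg -> Prop;
  vdash_refl : forall (G : Fm Sg -> Prop) phi, G phi -> vdash G phi;
  vdash_mono : forall (G D : Fm Sg -> Prop) phi,
      (forall x, G x -> D x) -> vdash G phi -> vdash D phi;
  vdash_cut : forall (G D : Fm Sg -> Prop) phi,
      (forall x, D x -> vdash G x) -> vdash D phi -> vdash G phi;
  vdash_struct : forall (s : nat -> Fm Sg) (G : Fm Sg -> Prop) phi,
      vdash G phi ->
      vdash (fun x => exists y, G y /\ x = subst s y) (subst s phi)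
}.

Arguments vdash {Sg} l _ _.

Section Defs.
Variables (Sg : signature) (L : logic Sg).
Notation F := (Fm Sg).
Notation rel := (F -> F -> Prop).

Definition interderivable (a b : F) : Prop :=
  vdash L (sing a) b /\ vdash L (sing b) a.
Definition selfextensional : Prop :=
  forall (f : sym Sg) (a b : Fin.t (arity Sg f) -> F),
    (forall i, interderivable (a i) (b i)) -> interderivable (App f a) (App f b).

Definition is_conj (d : F) : Prop :=
  forall phi psi chi, vdash L (sing (bin d phi psi)) chi <-> vdash L (pair2 phi psi) chi.
Definition is_disj (d : F) : Prop :=
  forall phi psi chi, vdash L (sing (bin d phi psi)) chi <->
                      (vdash L (sing phi) chi /\ vdash L (sing psi) chi).
Definition is_top (t : F) : Prop := closed t /\ forall phi, vdash L (sing phi) t.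

Definition r_top (t : F) (R : rel) : Prop := R t t.
Definition r_SI (R : rel) : Prop :=
  forall al be phi, R al phi -> vdash L (sing be) al -> R be phi.
Definition r_WO (R : rel) : Prop :=
  forall al phi psi, R al phi -> vdash L (sing phi) psi -> R al psi.
Definition r_AND (c : F) (R : rel) : Prop :=
  forall al phi psi, R al phi -> R al psi -> R al (bin c phi psi).
Definition r_OR (d : F) (R : rel) : Prop :=
  forall al be phi, R al phi -> R be phi -> R (bin d al be) phi.
Definition r_CT (c : F) (R : rel) : Prop :=
  forall al phi psi, R al phi -> R (bin c al phi) psi -> R al psi.

Definition r_AND_down (c : F) (N R : rel) : Prop :=
  forall al phi psi, N al phi -> R al psi -> R al (bin c phi psi).
Definition r_OR_down (d : F) (N R : rel) : Prop :=
  forall al be phi, N al phi -> R be phi -> R (bin d al be) phi.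
Definition r_CT_down (c : F) (N R : rel) : Prop :=
  forall al phi psi, N al phi -> R (bin c al phi) psi -> R al (bin c phi psi).

Definition closure (Rule : rel -> Prop) (N : rel) : rel :=
  fun a b => forall R : rel, (forall x y, N x y -> R x y) -> Rule R -> R a b.

Definition addpair (N : rel) (al phi : F) : rel :=
  fun x y => N x y \/ (x = al /\ y = phi).

Definition closure_at (Rule : rel -> Prop) (N : rel) (al phi : F) : rel :=
  closure Rule (addpair N al phi).

Definition Sop (Rule : rel -> Prop) (P N : rel) : rel :=
  fun a b =>
    ((exists x y, P x y) /\ exists x y, P x y /\ closure_at Rule N x y a b) \/
    (~ (exists x y, P x y) /\ closure Rule N a b).

Definition rules (c d t : F) (i : nat) : rel -> Prop :=
  fun R =>
    match i with
    | 1 => r_top t R /\ r_SI R /\ r_WO R /\ r_AND c R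
    | 2 => r_top t R /\ r_SI R /\ r_WO R /\ r_AND c R /\ r_OR d R
    | 3 => r_top t R /\ r_SI R /\ r_WO R /\ r_AND c R /\ r_CT c R
    | _ => r_top t R /\ r_SI R /\ r_WO R /\ r_AND c R /\ r_OR d R /\ r_CT c R
    end.

Definition PN (N : rel) : rel :=
  fun al phi => forall psi, N al psi -> exists chi, ~ vdash L (pair2 phi psi) chi.

End Defs.

(* Each relation in the union S(P,N) is the least extension of N, or of N plus
   one pair, closed under the rule in question, so it contains N and is closed
   under that rule.  A rule whose conclusion depends on a single premise in S
   (the extra premises of the "down" rules lie in N, hence in every member)
   therefore passes from the members to their union.  For item 5, (SI) turns
   (al, psi) into (al /\ phi, psi), since al /\ phi |- al, and (CT)^down then
   yields (al, phi /\ psi). *)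
From Stdlib Require Import Classical.

Set Implicit Arguments.

Section Closures.
Variables (Sg : signature) (L : logic Sg).
Notation F := (Fm Sg).
Notation rel := (F -> F -> Prop).

Lemma closure_incl (Rule : rel -> Prop) (N : rel) :
  forall a b, N a b -> closure Rule N a b.
Proof. intros a b Hab R HN _; exact (HN a b Hab). Qed.

Lemma closure_at_incl (Rule : rel -> Prop) (N : rel) (x y : F) :
  forall a b, N a b -> closure_at Rule N x y a b.
Proof. intros a b Hab; apply closure_incl; left; exact Hab. Qed.

Lemma closure_AND (c : F) (N : rel) : r_AND c (closure (r_AND c) N).
Proof. intros al phi psi H1 H2 R HN HR; apply HR; [apply H1 | apply H2]; assumption. Qed.

Lemma closure_OR (d : F) (N : rel) : r_OR d (closure (r_OR d) N).
Proof. intros al be phi H1 H2 R HN HR; apply HR; [apply H1 | apply H2]; assumption. Qed.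

Lemma closure_CT (c : F) (N : rel) : r_CT c (closure (r_CT c) N).
Proof. intros al phi psi H1 H2 R HN HR; eapply HR; [apply H1 | apply H2]; assumption. Qed.

Lemma closure_top (t : F) (N : rel) : r_top t (closure (r_top t) N).
Proof. intros R _ HR; exact HR. Qed.

Lemma closure_SI (N : rel) : r_SI L (closure (r_SI L) N).
Proof. intros al be phi H Hbe R HN HR; exact (HR al be phi (H R HN HR) Hbe). Qed.

Lemma closure_WO (N : rel) : r_WO L (closure (r_WO L) N).
Proof. intros al phi psi H Hpsi R HN HR; exact (HR al phi psi (H R HN HR) Hpsi). Qed.

End Closures.

Section DownRules.
Variable Sg : signature.
Notation F := (Fm Sg).
Notation rel := (F -> F -> Prop).
Variables (N R : rel).
Hypothesis N_sub_R : forall a b, N a b -> R a b.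

Lemma AND_down_of_AND (c : F) : r_AND c R -> r_AND_down c N R.
Proof. intros HAND al phi psi HN HR; apply HAND; [apply N_sub_R |]; assumption. Qed.

Lemma OR_down_of_OR (d : F) : r_OR d R -> r_OR_down d N R.
Proof. intros HOR al be phi HN HR; apply HOR; [apply N_sub_R |]; assumption. Qed.

Lemma CT_down_of_CT_AND (c : F) : r_CT c R -> r_AND c R -> r_CT_down c N R.
Proof.
  intros HCT HAND al phi psi HN HR.
  apply HAND; [apply N_sub_R; exact HN |].
  exact (HCT al phi psi (N_sub_R HN) HR).
Qed.

End DownRules.

Lemma conj_elim_l (Sg : signature) (L : logic Sg) (c a b : Fm Sg) :
  is_conj L c -> vdash L (sing (bin c a b)) a.
Proof. intros Hc; apply (proj2 (Hc a b a)), vdash_refl; left; reflexivity. Qed.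

Lemma AND_down_of_SI_CT_down (Sg : signature) (L : logic Sg) (c : Fm Sg)
  (N R : Fm Sg -> Fm Sg -> Prop) :
  is_conj L c -> r_SI L R -> r_CT_down c N R -> r_AND_down c N R.
Proof.
  intros Hc HSI HCT al phi psi HN HR.
  apply HCT; [exact HN |].
  exact (HSI al (bin c al phi) psi HR (conj_elim_l al phi Hc)).
Qed.

Section UnionOfClosures.
Variable Sg : signature.
Notation F := (Fm Sg).
Notation rel := (F -> F -> Prop).
Variables (Rule : rel -> Prop) (P N : rel).

Lemma Sop_transfer (a b a' b' : F) :
  (~ (exists x y, P x y) -> closure Rule N a b -> closure Rule N a' b') ->
  (forall x y, P x y -> closure_at Rule N x y a b -> closure_at Rule N x y a' b') ->
  Sop Rule P N a b -> Sop Rule P N a' b'.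
Proof.
  intros Hempty Hpair [[HP [x [y [Pxy Hab]]]] | [HP Hab]].
  - left; split; [exact HP |].
    exists x, y; split; [exact Pxy | exact (Hpair x y Pxy Hab)].
  - right; split; [exact HP | exact (Hempty HP Hab)].
Qed.

Lemma Sop_intro (a b : F) :
  closure Rule N a b -> (forall x y, P x y -> closure_at Rule N x y a b) ->
  Sop Rule P N a b.
Proof.
  intros Hempty Hpair.
  destruct (classic (exists x y, P x y)) as [[x [y Pxy]] | HP].
  - left; split; [exists x, y; exact Pxy |].
    exists x, y; split; [exact Pxy | exact (Hpair x y Pxy)].
  - right; split; [exact HP | exact Hempty].
Qed.

End UnionOfClosures.

Section ClosurePropertiesOfSop.
Variables (Sg : signature) (L : logic Sg).
Notation F := (Fm Sg).
Notation rel := (F -> F -> Prop).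
Variables (P N : rel).

Lemma Sop_AND_down (c : F) : r_AND_down c N (Sop (r_AND c) P N).
Proof.
  intros al phi psi HN; apply Sop_transfer.
  - intros _; eapply AND_down_of_AND; [apply closure_incl | apply closure_AND | exact HN].
  - intros x y _; eapply AND_down_of_AND;
      [apply closure_at_incl | apply closure_AND | exact HN].
Qed.

Lemma Sop_OR_down (d : F) : r_OR_down d N (Sop (r_OR d) P N).
Proof.
  intros al be phi HN; apply Sop_transfer.
  - intros _; eapply OR_down_of_OR; [apply closure_incl | apply closure_OR | exact HN].
  - intros x y _; eapply OR_down_of_OR;
      [apply closure_at_incl | apply closure_OR | exact HN].
Qed.

Lemma Sop_CT_down (c : F) :
  r_AND c (closure (r_CT c) N) ->
  (forall x y, P x y -> r_AND c (closure_at (r_CT c) N x y)) ->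
  r_CT_down c N (Sop (r_CT c) P N).
Proof.
  intros HAND HANDat al phi psi HN; apply Sop_transfer.
  - intros _; eapply CT_down_of_CT_AND;
      [apply closure_incl | apply closure_CT | exact HAND | exact HN].
  - intros x y Pxy; eapply CT_down_of_CT_AND;
      [apply closure_at_incl | apply closure_CT | exact (HANDat x y Pxy) | exact HN].
Qed.

Lemma Sop_top (t : F) : r_top t (Sop (r_top t) P N).
Proof. apply Sop_intro; [| intros x y _]; apply closure_top. Qed.

Lemma Sop_SI : r_SI L (Sop (r_SI L) P N).
Proof.
  intros al be phi H Hbe; revert H; apply Sop_transfer;
    [intros _ H | intros x y _ H]; eapply closure_SI; eassumption.
Qed.

Lemma Sop_WO : r_WO L (Sop (r_WO L) P N).
Proof.
  intros al phi psi H Hpsi; revert H; apply Sop_transfer;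
    [intros _ H | intros x y _ H]; eapply closure_WO; eassumption.
Qed.

End ClosurePropertiesOfSop.

Theorem proposition4p13 (Sg : signature) (L : logic Sg)
  (N P : Fm Sg -> Fm Sg -> Prop) :
  selfextensional L ->
  (forall a b, P a b -> PN L N a b) ->
  (* 1 *)
  (forall c, is_conj L c ->
     r_AND_down c N (Sop (r_AND c) P N)) /\
  (* 2 *)
  (forall d, is_disj L d ->
     r_OR_down d N (Sop (r_OR d) P N)) /\
  (* 3 *)
  (forall c, is_conj L c ->
     r_AND c (closure (r_CT c) N) ->
     (forall be ga, P be ga -> r_AND c (closure_at (r_CT c) N be ga)) ->
     r_CT_down c N (Sop (r_CT c) P N)) /\
  (* 4 *)
  ((forall t, is_top L t -> r_top t (Sop (r_top t) P N)) /\
   r_SI L (Sop (r_SI L) P N) /\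
   r_WO L (Sop (r_WO L) P N)) /\
  (* 5 *)
  (forall (i : nat) (c d t : Fm Sg), 1 <= i <= 4 ->
     is_conj L c -> is_top L t -> (i = 2 \/ i = 4 -> is_disj L d) ->
     r_SI L (Sop (rules L c d t i) P N) ->
     r_CT_down c N (Sop (rules L c d t i) P N) ->
     r_AND_down c N (Sop (rules L c d t i) P N)).
Proof.
  intros _ _.
  split; [| split; [| split; [| split]]].
  - intros c _; apply Sop_AND_down.
  - intros d _; apply Sop_OR_down.
  - intros c _; apply Sop_CT_down.
  - split; [| split].
    + intros t _; apply Sop_top.
    + apply Sop_SI.
    + apply Sop_WO.
  - intros i c d t _ Hc _ _; apply AND_down_of_SI_CT_down; exact Hc.
Qed.
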